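(* Let $\sigma(x,y)=(x\rightharpoonup y,x\leftharpoonup y)$ be an involutive left-non-degenerate quiver-theoretic Yang--Baxter map on a quiver $\mathscr{A}$ over $\Lambda$, let $x\star y:=(x\rightharpoonup\cdot)^{-1}(y)$ for $\mathfrak{s}(x)=\mathfrak{s}(y)$, and let $(\hat{\mathscr{A}},\hat\star)$ be the completion of the weak RC-system $(\mathscr{A},\star)$. Then the structure category $\mathscr{C}(\hat{\mathscr{A}})$ of the unital weak RC-system $(\hat{\mathscr{A}},\hat\star)$ is isomorphic to the structure category $\mathscr{C}(\sigma)$ of $\sigma$.
   Context: A quiver-theoretic Yang--Baxter map is a source/target-preserving map $\sigma$ on composable pairs satisfying the braid relation; involutive: $\sigma^2=\mathrm{id}$; left-non-degenerate: each $x\rightharpoonup\cdot\colon\mathscr{A}(\mathfrak{t}(x),\Lambda)\to\mathscr{A}(\mathfrak{s}(x),\Lambda)$ is bijective. $\mathscr{C}(\sigma)$ is the category presented by generators $\mathscr{A}$ and relations $x|y\sim(x\rightharpoonup y)|(x\leftharpoonup y)$ (path category modulo the generated congruence). A weak RC-system $(Q,\star)$: a quiver with partial operation such that $x\star y$ is defined only if $\mathfrak{s}(x)=\mathfrak{s}(y)$; if $x\star y$ is defined so is $y\star x$, $\mathfrak{s}(x\star y)=\mathfrak{t}(x)$, $\mathfrak{s}(y\star x)=\mathfrak{t}(y)$, $\mathfrak{t}(x\star y)=\mathfrak{t}(y\star x)$; and RC-law: if $x\star y,x\star z,(x\star y)\star(x\star z)$ are defined then $y\star z,(y\star x)\star(y\star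 z)$ are defined and $(x\star y)\star(x\star z)=(y\star x)\star(y\star z)$. A unit family is a family $\mathcal{E}=\{\epsilon_\lambda\}$ of loops $\epsilon_\lambda\colon\lambda\to\lambda$ with $x\star\epsilon_{\mathfrak{s}(x)}=\epsilon_{\mathfrak{t}(x)}$, $\epsilon_{\mathfrak{s}(x)}\star x=x$, $x\star x=\epsilon_{\mathfrak{t}(x)}$ (all defined) for all $x$; the system is unital if it has a unit family and $x\star y=y\star x=\epsilon_\mu$ with $x,y$ of target $\mu$ implies $x=y$. The completion $(\hat Q,\hat\star)$ adds a new loop $\epsilon_\lambda\notin Q$ at each vertex and sets $\epsilon_{\mathfrak{s}(y)}\hat\star y=y$, $x\hat\star\epsilon_{\mathfrak{s}(x)}=\epsilon_{\mathfrak{t}(x)}$, $x\hat\star x=\epsilon_{\mathfrak{t}(x)}$, and $x\hat\star y=x\star y$ otherwise. For a unital weak RC-system, $\star$ extends to paths by filling grids: for nonempty paths $\alpha=a_1|\dots|a_r$, $\beta=b_1|\dots|b_s$ with common source, fill an $r\times s$ grid whose squares are $(x,y)\mapsto(x\star y,y\star x)$ and let $\alpha\star\beta$ be the right column; with $\varepsilon\star\varepsilon=\varepsilon$, $\varepsilon\star\alpha=\alpha$, $\alpha\star\varepsilon=\varepsilon$ for empty paths $\varepsilon$. Define $\alpha\equiv\beta$ iff $\alpha\star\beta$ and $\beta\star\alpha$ both lie in $\mathrm{Path}(\mathcal{E})$; this is a congruence and the structure category is $\mathscr{C}(Q)=\mathrm{Path}(Q)/\!\equiv$. (Under the hypotheses,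 $(\hat{\mathscr{A}},\hat\star)$ is a unital weak RC-system.) *)

From Stdlib Require Import List ClassicalEpsilon.
Import ListNotations.
Set Implicit Arguments.

(* A quiver: vertex type V, arrow type E, source s and target t.
   A path is a source vertex together with a list of arrows read left to right:
   x | y is composable iff t x = s y. *)
Section Paths.
Variables (V E : Type) (s t : E -> V).

Fixpoint chain (v : V) (l : list E) : Prop :=
  match l with
  | [] => True
  | x :: l' => s x = v /\ chain (t x) l'
  end.

Fixpoint endv (v : V) (l : list E) : V :=
  match l with
  | [] => v
  | x :: l' => endv (t x) l'
  end.

Definition path := (V * list E)%type.
Definition pvalid (p : path) : Prop := chain (fst p) (snd p).
Definition psrc (p : path) : V := fst p.
Definition ptgt (p : path) : V := endv (fst p) (snd p).
Definition pid (v : V) : path := (v, []).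
Definition pcat (p q : path) : path := (fst p, snd p ++ snd q).
End Paths.

Record PCat := {
  Ob : Type;
  Mor : Type;
  msrc : Mor -> Ob;
  mtgt : Mor -> Ob;
  mvalid : Mor -> Prop;     (* representatives that are actual morphisms *)
  mid : Ob -> Mor;
  mcomp : Mor -> Mor -> Mor; (* diagrammatic: mcomp f g = "f then g" *)
  meq : Mor -> Mor -> Prop   (* the congruence defining the quotient *)
}.

Definition is_functor (C D : PCat) (fo : Ob C -> Ob D) (F : Mor C -> Mor D) : Prop :=
  (forall p, mvalid C p ->
     mvalid D (F p) /\ msrc D (F p) = fo (msrc C p) /\ mtgt D (F p) = fo (mtgt C p)) /\
  (forall p q, mvalid C p -> mvalid C q -> meq C p q -> meq D (F p) (F q)) /\
  (forall a, meq D (F (mid C a)) (mid D (fo a))) /\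
  (forall p q, mvalid C p -> mvalid C q -> mtgt C p = msrc C q ->
     meq D (F (mcomp C p q)) (mcomp D (F p) (F q))).

Definition cat_iso (C D : PCat) : Prop :=
  exists (fo : Ob C -> Ob D) (go : Ob D -> Ob C) (F : Mor C -> Mor D) (G : Mor D -> Mor C),
    is_functor C D fo F /\ is_functor D C go G /\
    (forall a, go (fo a) = a) /\ (forall b, fo (go b) = b) /\
    (forall p, mvalid C p -> meq C (G (F p)) p) /\
    (forall q, mvalid D q -> meq D (F (G q)) q).

(* sigma(x,y) = (lact x y, ract x y) = (x -> y, x <- y), meaningful on composable
   pairs t x = s y (values elsewhere are irrelevant). *)
Section YB.
Variables (L A : Type) (s t : A -> L) (lact ract : A -> A -> A).

Definition sigma (x y : A) : A * A := (lact x y, ract x y).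

Definition st_preserving : Prop :=
  forall x y, t x = s y ->
    s (lact x y) = s x /\ t (lact x y) = s (ract x y) /\ t (ract x y) = t y.

(* sigma_1 sigma_2 sigma_1 = sigma_2 sigma_1 sigma_2 on composable triples x|y|z *)
Definition braid : Prop :=
  forall x y z, t x = s y -> t y = s z ->
    (let '(a1, b1) := sigma x y in
     let '(b2, c2) := sigma b1 z in
     let '(a3, b3) := sigma a1 b2 in (a3, b3, c2))
    =
    (let '(b1, c1) := sigma y z in
     let '(a2, b2) := sigma x b1 in
     let '(b3, c3) := sigma b2 c1 in (a2, b3, c3)).

Definition qYB_map : Prop := st_preserving /\ braid.

Definition involutive : Prop :=
  forall x y, t x = s y -> sigma (lact x y) (ract x y) = (x, y).

Definition left_nondeg : Prop :=
  forall x,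
    (forall y z, s y = t x -> s z = t x -> lact x y = lact x z -> y = z) /\
    (forall z, s z = s x -> exists y, s y = t x /\ lact x y = z).

Inductive sig_cong : path L A -> path L A -> Prop :=
| sc_gen x y : t x = s y -> sig_cong (s x, [x; y]) (s x, [lact x y; ract x y])
| sc_refl p : pvalid s t p -> sig_cong p p
| sc_sym p q : sig_cong q p -> sig_cong p q
| sc_trans p q r : sig_cong p q -> sig_cong q r -> sig_cong p r
| sc_cat p p' q q' : sig_cong p p' -> sig_cong q q' -> ptgt t p = psrc q ->
    sig_cong (pcat p q) (pcat p' q').

Definition C_sigma : PCat :=
  {| Ob := L; Mor := path L A; msrc := @psrc L A; mtgt := ptgt t;
     mvalid := pvalid s t; mid := @pid L A; mcomp := @pcat L A; meq := sig_cong |}.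
End YB.

Section RC.
Variables (V E : Type) (s t : E -> V) (star : E -> E -> E) (isunit : E -> Prop).

(* one row of the grid: transport the column b past the arrow x *)
Fixpoint star1 (x : E) (b : list E) : list E :=
  match b with
  | [] => []
  | y :: b' => star x y :: star1 (star y x) b'
  end.

(* alpha * beta: right column of the grid with alpha on top, beta on the left *)
Fixpoint starp (a b : list E) : list E :=
  match a with
  | [] => b
  | x :: a' => starp a' (star1 x b)
  end.

Definition rc_equiv (p q : path V E) : Prop :=
  pvalid s t p /\ pvalid s t q /\ psrc p = psrc q /\
  Forall isunit (starp (snd p) (snd q)) /\ Forall isunit (starp (snd q) (snd p)).

Definition C_rc : PCat :=
  {| Ob := V; Mor := path V E; msrc := @psrc V E; mtgt := ptgt t;
     mvalid := pvalid s t; mid := @pid V E; mcomp := @pcat V E; meq := rc_equiv |}.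
End RC.

Inductive hat (L A : Type) : Type :=
| harr : A -> hat L A
| heps : L -> hat L A.
Arguments harr {L A}.
Arguments heps {L A}.

Section Completion.
Variables (L A : Type) (s t : A -> L) (star : A -> A -> A).

Definition hs (x : hat L A) : L := match x with harr a => s a | heps v => v end.
Definition ht (x : hat L A) : L := match x with harr a => t a | heps v => v end.
Definition is_heps (x : hat L A) : Prop := match x with harr _ => False | heps _ => True end.

(* eps_{s y} ^* y = y ; x ^* eps_{s x} = eps_{t x} ; x ^* x = eps_{t x} ;
   otherwise x ^* y = x * y   (only meaningful when hs x = hs y) *)
Definition hstar (x y : hat L A) : hat L A :=
  match x, y with
  | heps _, _ => y
  | harr a, heps _ => heps (t a)
  | harr a, harr b =>
      if excluded_middle_informative (a = b) then heps (t a) else harr (star a b)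
  end.

Definition C_hat : PCat := C_rc hs ht hstar is_heps.
End Completion.

(* A path x1|...|xn from v is encoded by its left reading
   [x1; x1 -> x2; x1 -> (x2 -> x3); ...], a list of arrows out of v; left
   non-degeneracy makes this encoding injective, with an inverse built from [star].
   By involutivity the generator x|y ~ (x -> y)|(x <- y) swaps two adjacent entries of
   the reading, and conversely every transposition of the reading is realised by
   generators thanks to the RC law, itself a consequence of the braid relation. So two
   paths are congruent in C(sigma) iff their readings are permutations of each other.
   In the completion the units contribute nothing to the reading, and filling a grid
   cancels, row by row, the common part of the two readings: alpha * beta consists of
   units iff the reading of beta is a sub-multiset of that of alpha. Hence
   alpha == beta again means equal readings up to permutation, and deleting the units
   and including A into hat A are mutually inverse functors. *)

From Stdlib Require Import List Permutation ClassicalEpsilon Lia Wf_nat.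
Import ListNotations.

Lemma chain_app (V E : Type) (s t : E -> V) (v : V) (l1 l2 : list E) :
  chain s t v (l1 ++ l2) <-> chain s t v l1 /\ chain s t (endv t v l1) l2.
Proof.
  revert v; induction l1 as [|x l1 IH]; intros v; simpl.
  - tauto.
  - rewrite IH. tauto.
Qed.

Lemma endv_app (V E : Type) (t : E -> V) (v : V) (l1 l2 : list E) :
  endv t v (l1 ++ l2) = endv t (endv t v l1) l2.
Proof. revert v; induction l1; simpl; auto. Qed.

Section Solution.
Variables (L A : Type) (s t : A -> L) (lact ract : A -> A -> A) (star : A -> A -> A).
Hypothesis Hyb : qYB_map s t lact ract.
Hypothesis Hinv : involutive s t lact ract.
Hypothesis Hlnd : left_nondeg s t lact.
Hypothesis Hstar : forall x y, s x = s y -> s (star x y) = t x /\ lact x (star x y) = y.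

Lemma src_lact x y : t x = s y -> s (lact x y) = s x.
Proof. intros H. apply (proj1 Hyb x y H). Qed.

Lemma tgt_lact x y : t x = s y -> t (lact x y) = s (ract x y).
Proof. intros H. apply (proj1 Hyb x y H). Qed.

Lemma tgt_ract x y : t x = s y -> t (ract x y) = t y.
Proof. intros H. apply (proj1 Hyb x y H). Qed.

Lemma braid_lact x y z : t x = s y -> t y = s z ->
  lact (lact x y) (lact (ract x y) z) = lact x (lact y z).
Proof.
  intros Hxy Hyz. pose proof (proj2 Hyb x y z Hxy Hyz) as Hb.
  unfold sigma in Hb; simpl in Hb. injection Hb; auto.
Qed.

Lemma lact_inj x y z : s y = t x -> s z = t x -> lact x y = lact x z -> y = z.
Proof. apply (proj1 (Hlnd x)). Qed.

Lemma src_star x y : s x = s y -> s (star x y) = t x.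
Proof. intros H. apply (Hstar x y H). Qed.

Lemma lact_star x y : s x = s y -> lact x (star x y) = y.
Proof. intros H. apply (Hstar x y H). Qed.

Lemma star_lact x z : s z = t x -> star x (lact x z) = z.
Proof.
  intros H. assert (Hx : s x = s (lact x z)) by (symmetry; apply src_lact; auto).
  apply (lact_inj x); auto using src_star, lact_star.
Qed.

(* Involutivity at (a, a * b), which sigma sends to (b, ract a (a * b)), gives
   b -> ract a (a * b) = a. *)
Lemma ract_star a b : s a = s b -> ract a (star a b) = star b a.
Proof.
  intros Hab. assert (Hy : t a = s (star a b)) by (symmetry; apply src_star; auto).
  pose proof (Hinv a (star a b) Hy) as Hi. unfold sigma in Hi.
  rewrite (lact_star a b Hab) in Hi. injection Hi as Hb Ha.
  apply (lact_inj b).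
  - rewrite <- (tgt_lact a _ Hy), (lact_star a b Hab). reflexivity.
  - apply src_star. congruence.
  - rewrite Hb, lact_star by congruence. reflexivity.
Qed.

Lemma tgt_star_comm a b : s a = s b -> t (star a b) = t (star b a).
Proof.
  intros Hab. rewrite <- (ract_star a b Hab), tgt_ract; auto.
  symmetry. apply src_star. auto.
Qed.

Lemma lact_star_comm a b z : s a = s b -> s z = t (star a b) ->
  lact a (lact (star a b) z) = lact b (lact (star b a) z).
Proof.
  intros Hab Hz. rewrite <- (braid_lact a (star a b) z).
  - rewrite (lact_star a b Hab), (ract_star a b Hab). reflexivity.
  - symmetry. apply src_star. auto.
  - auto.
Qed.

(* Both sides are sent to c by z |-> b -> ((b * a) -> z), by [lact_star_comm]. *)
Lemma star_RC a b c : s a = s b -> s a = s c ->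
  star (star a b) (star a c) = star (star b a) (star b c).
Proof.
  intros Hab Hac. set (w := star (star a b) (star a c)).
  assert (Hw : s w = t (star a b)) by (apply src_star; rewrite !src_star; congruence).
  assert (Hlw : lact b (lact (star b a) w) = lact b (star b c)).
  { rewrite <- lact_star_comm by auto. unfold w.
    rewrite !lact_star by (rewrite ?src_star; congruence). reflexivity. }
  apply lact_inj in Hlw.
  - rewrite <- Hlw, star_lact; auto. rewrite <- tgt_star_comm; auto.
  - rewrite src_lact; [apply src_star; congruence|]. rewrite <- tgt_star_comm; auto.
  - apply src_star. congruence.
Qed.

Definition starts_at (v : L) (l : list A) : Prop := Forall (fun e => s e = v) l.

Fixpoint lread (l : list A) : list A :=
  match l with [] => [] | x :: l' => x :: map (lact x) (lread l') end.

Definition lact_list (l : list A) (z : A) : A := fold_right lact z l.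

Lemma lread_app l1 l2 : lread (l1 ++ l2) = lread l1 ++ map (lact_list l1) (lread l2).
Proof.
  induction l1 as [|x l1 IH]; simpl.
  - rewrite map_id. reflexivity.
  - rewrite IH, map_app, map_map. reflexivity.
Qed.

Lemma lread_starts_at v l : chain s t v l -> starts_at v (lread l).
Proof.
  revert v; induction l as [|x l IH]; intros v Hl; simpl; constructor.
  - apply Hl.
  - destruct Hl as [Hx Hl].
    apply Forall_map. eapply Forall_impl; [|exact (IH _ Hl)].
    intros e He. rewrite src_lact; auto.
Qed.

Lemma src_lact_list v l z : chain s t v l -> s z = endv t v l -> s (lact_list l z) = v.
Proof.
  revert v; induction l as [|x l IH]; intros v Hl Hz; simpl in *; auto.
  destruct Hl as [Hx Hl]. rewrite src_lact; auto. symmetry. apply IH; auto.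
Qed.

Lemma sig_cong_valid p q : sig_cong s t lact ract p q ->
  pvalid s t p /\ pvalid s t q /\ psrc p = psrc q /\ ptgt t p = ptgt t q.
Proof.
  induction 1 as [x y H|p H|p q _ IH|p q r _ IH1 _ IH2|[v l] [v' l'] [w m] [w' m'] _ IH1 _ IH2 Ht].
  - unfold pvalid, psrc, ptgt; simpl.
    rewrite src_lact, tgt_lact, tgt_ract by auto. intuition congruence.
  - tauto.
  - intuition congruence.
  - intuition congruence.
  - unfold pvalid, psrc, ptgt, pcat in *; simpl in *.
    rewrite !chain_app, !endv_app. intuition congruence.
Qed.

Lemma sig_cong_lact_list p q : sig_cong s t lact ract p q ->
  forall z, s z = ptgt t p -> lact_list (snd p) z = lact_list (snd q) z.
Proof.
  intros Hpq.
  induction Hpq as [x y H|p H|p q Hqp IH|p q r Hpq IH1 _ IH2|p p' q q' Hp IH1 Hq IH2 Ht];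
    intros z Hz.
  - simpl. symmetry. apply braid_lact; auto.
  - reflexivity.
  - symmetry. apply IH. destruct (sig_cong_valid _ _ Hqp) as [_ [_ [_ E]]]. congruence.
  - destruct (sig_cong_valid _ _ Hpq) as [_ [_ [_ E]]]. rewrite IH1, IH2; congruence.
  - destruct p as [v l], p' as [v' l'], q as [w m], q' as [w' m'].
    destruct (sig_cong_valid _ _ Hq) as [Hm [Hm' [Ew E]]].
    unfold pvalid, psrc, ptgt, pcat in *; simpl in *. rewrite endv_app in Hz.
    unfold lact_list in *. rewrite !fold_right_app, IH2 by congruence. apply IH1.
    rewrite Ht, Ew. apply src_lact_list; congruence.
Qed.

Lemma sig_cong_lread_perm p q : sig_cong s t lact ract p q ->
  Permutation (lread (snd p)) (lread (snd q)).
Proof.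
  induction 1 as [x y H|p H|p q _ IH|p q r _ IH1 _ IH2|p p' q q' Hp IH1 Hq IH2 Ht]; simpl.
  - pose proof (Hinv x y H) as Hi. unfold sigma in Hi. injection Hi as Hx _.
    rewrite Hx. apply perm_swap.
  - reflexivity.
  - symmetry. exact IH.
  - eapply Permutation_trans; eauto.
  - rewrite !lread_app. apply Permutation_app; auto.
    transitivity (map (lact_list (snd p')) (lread (snd q))); [|apply Permutation_map; auto].
    apply Permutation_refl'. apply map_ext_in. intros e He.
    apply (sig_cong_lact_list _ _ Hp). rewrite Ht.
    destruct (sig_cong_valid _ _ Hq) as [Hvq _].
    pose proof (lread_starts_at _ _ Hvq) as F. unfold starts_at in F.
    rewrite Forall_forall in F. apply F. exact He.
Qed.

Lemma starts_at_map_star v u l : s u = v -> starts_at v l -> starts_at (t u) (map (star u) l).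
Proof.
  intros Hu Hl. apply Forall_map. eapply Forall_impl; [|exact Hl].
  intros e He. apply src_star. congruence.
Qed.

(* The inverse of [lread]; the fuel [length l] suffices since each step drops one arrow. *)
Fixpoint unread_fuel (n : nat) (l : list A) : list A :=
  match n, l with
  | S n', u :: l' => u :: unread_fuel n' (map (star u) l')
  | _, _ => []
  end.

Definition unread (l : list A) : list A := unread_fuel (length l) l.

Lemma unread_cons u l : unread (u :: l) = u :: unread (map (star u) l).
Proof. unfold unread; simpl. rewrite length_map. reflexivity. Qed.

Lemma unread_chain l v : starts_at v l -> chain s t v (unread l).
Proof.
  revert v; induction l as [l IH] using (well_founded_ind (well_founded_ltof _ (@length A))).
  intros v Hl. destruct l as [|u l]; [exact I|]. unfold starts_at in Hl.
  rewrite unread_cons. apply Forall_cons_iff in Hl as [Hu Hl]. split; auto.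
  apply IH; [unfold ltof; simpl; rewrite length_map; lia|].
  apply (starts_at_map_star v); auto.
Qed.

Lemma unread_lread l v : chain s t v l -> unread (lread l) = l.
Proof.
  revert v; induction l as [|x l IH]; intros v Hl; simpl; [reflexivity|].
  destruct Hl as [_ Hl]. rewrite unread_cons, map_map. f_equal.
  rewrite <- (IH _ Hl) at 2. f_equal.
  rewrite <- (map_id (lread l)) at 2. apply map_ext_in. intros e He.
  apply star_lact. pose proof (lread_starts_at _ _ Hl) as F.
  unfold starts_at in F. rewrite Forall_forall in F. auto.
Qed.

Lemma sig_cong_cons v a l l' : s a = v -> sig_cong s t lact ract (t a, l) (t a, l') ->
  sig_cong s t lact ract (v, a :: l) (v, a :: l').
Proof.
  intros Ha H.
  change (sig_cong s t lact ract (pcat (v, [a]) (t a, l)) (pcat (v, [a]) (t a, l'))).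
  apply sc_cat; auto. apply sc_refl. split; auto. exact I.
Qed.

(* The generator a | a * x ~ x | x * a, followed by equal tails thanks to the RC law. *)
Lemma sig_cong_unread_swap v a x m : s a = v -> s x = v -> starts_at v m ->
  sig_cong s t lact ract (v, unread (a :: x :: m)) (v, unread (x :: a :: m)).
Proof.
  intros Ha Hx Hm. assert (Hax : s a = s x) by congruence.
  rewrite !unread_cons. simpl map. rewrite !unread_cons, !map_map.
  replace (map (fun c => star (star a x) (star a c)) m)
    with (map (fun c => star (star x a) (star x c)) m).
  2:{ apply map_ext_in. intros c Hc. symmetry. apply star_RC; auto.
      unfold starts_at in Hm. rewrite Forall_forall in Hm. rewrite (Hm c Hc). congruence. }
  set (tail := unread (map (fun c => star (star x a) (star x c)) m)).
  assert (Htail : chain s t (t (star a x)) tail).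
  { apply unread_chain. apply Forall_map. eapply Forall_impl; [|exact Hm].
    intros e He; simpl in He. rewrite tgt_star_comm by auto. apply src_star.
    rewrite !src_star; congruence. }
  pose proof (sc_gen s t lact ract a (star a x) (eq_sym (src_star a x Hax))) as G.
  rewrite (lact_star a x Hax), (ract_star a x Hax) in G.
  pose proof (sc_cat G (sc_refl s t lact ract (t (star a x), tail) Htail) eq_refl) as G2.
  unfold pcat in G2; simpl in G2. rewrite Ha in G2. exact G2.
Qed.

Lemma sig_cong_unread_move la x lb v : starts_at v (la ++ x :: lb) ->
  sig_cong s t lact ract (v, unread (la ++ x :: lb)) (v, unread (x :: la ++ lb)).
Proof.
  revert x lb v.
  induction la as [la IH] using (well_founded_ind (well_founded_ltof _ (@length A))).
  intros x lb v Hs. unfold starts_at in *. destruct la as [|a la].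
  - apply sc_refl. apply unread_chain. exact Hs.
  - apply Forall_cons_iff in Hs as [Ha Hs]. apply Forall_app in Hs as [Hla Hxlb].
    apply Forall_cons_iff in Hxlb as [Hx Hlb].
    eapply sc_trans; [|apply sig_cong_unread_swap; auto; apply Forall_app; auto].
    simpl app. rewrite !unread_cons. simpl map. rewrite !map_app. simpl map.
    apply sig_cong_cons; auto. apply IH.
    + unfold ltof; simpl. rewrite length_map. lia.
    + apply Forall_app. split; [apply (starts_at_map_star v); auto|].
      constructor; [apply src_star; congruence|]. apply (starts_at_map_star v); auto.
Qed.

Lemma sig_cong_unread_perm l1 l2 v : Permutation l1 l2 -> starts_at v l1 ->
  sig_cong s t lact ract (v, unread l1) (v, unread l2).
Proof.
  revert l2 v; induction l1 as [l1 IH] using (well_founded_ind (well_founded_ltof _ (@length A))).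
  intros l2 v HP Hs. unfold starts_at in *. destruct l1 as [|x l1].
  - apply Permutation_nil in HP; subst. apply sc_refl. exact I.
  - assert (Hin : In x l2) by (eapply Permutation_in; eauto; left; auto).
    apply in_split in Hin as [la [lb ->]].
    apply Permutation_cons_app_inv in HP.
    eapply sc_trans; [|apply sc_sym, sig_cong_unread_move].
    + rewrite !unread_cons. apply Forall_cons_iff in Hs as [Hx Hs].
      apply sig_cong_cons; auto. apply IH.
      * unfold ltof; simpl. rewrite length_map. lia.
      * apply Permutation_map. exact HP.
      * apply (starts_at_map_star v); auto.
    + eapply Permutation_Forall; [|exact Hs]. apply Permutation_cons_app. exact HP.
Qed.

Lemma sig_cong_of_lread_perm v l1 l2 : chain s t v l1 -> chain s t v l2 ->
  Permutation (lread l1) (lread l2) -> sig_cong s t lact ract (v, l1) (v, l2).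
Proof.
  intros H1 H2 HP. rewrite <- (unread_lread l1 v H1), <- (unread_lread l2 v H2).
  apply sig_cong_unread_perm; auto. apply lread_starts_at. exact H1.
Qed.

Fixpoint arrows (l : list (hat L A)) : list A :=
  match l with
  | [] => []
  | harr a :: l' => a :: arrows l'
  | heps _ :: l' => arrows l'
  end.

Definition hread (l : list (hat L A)) : list A := lread (arrows l).

Definition hlact (x : hat L A) : A -> A :=
  match x with harr a => lact a | heps _ => fun z => z end.

Lemma arrows_app l1 l2 : arrows (l1 ++ l2) = arrows l1 ++ arrows l2.
Proof. induction l1 as [|[a|w] l IH]; simpl; f_equal; auto. Qed.

Lemma arrows_map_harr l : arrows (map harr l) = l.
Proof. induction l; simpl; f_equal; auto. Qed.

Lemma arrows_chain l v : chain (hs s) (ht t) v l ->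
  chain s t v (arrows l) /\ endv t v (arrows l) = endv (ht t) v l.
Proof.
  revert v; induction l as [|[a|w] l IH]; intros v Hl; simpl in *; auto.
  - destruct Hl as [Ha Hl]. destruct (IH _ Hl). auto.
  - destruct Hl as [-> Hl]. auto.
Qed.

Lemma map_harr_chain l v : chain s t v l ->
  chain (hs s) (ht t) v (map harr l) /\ endv (ht t) v (map harr l) = endv t v l.
Proof.
  revert v; induction l as [|a l IH]; intros v Hl; simpl in *; auto.
  destruct Hl as [Ha Hl]. destruct (IH _ Hl). auto.
Qed.

Lemma hread_cons x l : hread (x :: l) = arrows [x] ++ map (hlact x) (hread l).
Proof. destruct x; unfold hread; simpl; [reflexivity|]. rewrite map_id. reflexivity. Qed.

Lemma hread_starts_at l v : chain (hs s) (ht t) v l -> starts_at v (hread l).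
Proof. intros H. apply lread_starts_at. apply arrows_chain. exact H. Qed.

Lemma hlact_inj x y z : s y = ht t x -> s z = ht t x -> hlact x y = hlact x z -> y = z.
Proof. destruct x as [a|w]; simpl; auto. apply lact_inj. Qed.

Lemma src_hstar x y : hs s x = hs s y -> hs s (hstar t star x y) = ht t x.
Proof.
  destruct x as [a|w], y as [b|w']; simpl; intros H; auto.
  destruct (excluded_middle_informative (a = b)); simpl; auto using src_star.
Qed.

Lemma tgt_hstar_comm x y : hs s x = hs s y -> ht t (hstar t star x y) = ht t (hstar t star y x).
Proof.
  destruct x as [a|w], y as [b|w']; simpl; intros H; auto.
  destruct (excluded_middle_informative (a = b)), (excluded_middle_informative (b = a));
    simpl; subst; try congruence. apply tgt_star_comm. exact H.
Qed.

Lemma star1_heps w l : star1 (hstar t star) (heps w) l = l.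
Proof.
  revert w; induction l as [|[a|w'] l IH]; intros w; simpl; f_equal; apply IH.
Qed.

Lemma star1_chain x l v : chain (hs s) (ht t) v l -> hs s x = v ->
  chain (hs s) (ht t) (ht t x) (star1 (hstar t star) x l).
Proof.
  revert v x; induction l as [|y l IH]; intros v x Hl Hx; simpl in *; auto.
  destruct Hl as [Hy Hl]. split.
  - apply src_hstar. congruence.
  - rewrite tgt_hstar_comm by congruence. apply (IH (ht t y)); auto.
    apply src_hstar. congruence.
Qed.

(* Crossing the arrows [ax] turns the reading [r] into [r']: the part [C] of [ax]
   cancels against [r], the rest [D] does not occur in [r]. *)
Definition row_split (ax r r' : list A) : Prop :=
  exists C D, Permutation ax (C ++ D) /\ Permutation r (C ++ r') /\
    (forall e, In e D -> ~ In e r).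

Lemma row_split_lact b c r r' : s c = t b -> starts_at (t b) r -> lact b c <> b ->
  row_split [c] r r' -> row_split [lact b c] (b :: map (lact b) r) (b :: map (lact b) r').
Proof.
  intros Hc Hr Hcb (C & D & HCD & Hrr' & HD).
  exists (map (lact b) C), (map (lact b) D). split; [|split].
  - rewrite <- map_app. apply (Permutation_map (lact b)) in HCD. exact HCD.
  - rewrite <- Permutation_middle. apply perm_skip. rewrite <- map_app.
    apply Permutation_map. exact Hrr'.
  - intros e He Hin. apply in_map_iff in He as (d & <- & Hd).
    assert (Hdc : In d [c]).
    { apply (Permutation_in _ (Permutation_sym HCD)). apply in_or_app. auto. }
    destruct Hdc as [<-|[]].
    destruct Hin as [Hdb|Hin]; [congruence|].
    apply in_map_iff in Hin as (z & Hz & Hzr). apply (HD c Hd).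
    unfold starts_at in Hr. rewrite Forall_forall in Hr.
    replace c with z; auto. apply (lact_inj b); auto.
Qed.

Lemma row_split_arrow l a v : chain (hs s) (ht t) v l -> s a = v ->
  row_split [a] (hread l) (map (lact a) (hread (star1 (hstar t star) (harr a) l))).
Proof.
  revert a v; induction l as [|[b|w] l IH]; intros a v Hl Ha.
  - exists [], [a]. simpl. repeat split; auto.
  - destruct Hl as [Hb Hl]; simpl in Hb. simpl star1.
    destruct (excluded_middle_informative (a = b)) as [<-|Hab].
    + destruct (excluded_middle_informative (a = a)) as [_|]; [|congruence].
      rewrite star1_heps. exists [a], []. unfold hread; simpl.
      repeat split; auto.
    + destruct (excluded_middle_informative (b = a)) as [->|_]; [congruence|].
      assert (Hab' : s a = s b) by congruence.
      set (out := star1 (hstar t star) (harr (star b a)) l).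
      assert (Hout : starts_at (t (star a b)) (hread out)).
      { rewrite tgt_star_comm by auto. apply hread_starts_at.
        apply (star1_chain (harr (star b a)) l (t b)); auto. simpl. apply src_star. congruence. }
      rewrite !hread_cons. cbn [arrows app map hlact].
      rewrite (lact_star a b Hab'), map_map.
      replace (map (fun z => lact a (lact (star a b) z)) (hread out))
        with (map (lact b) (map (lact (star b a)) (hread out))).
      2:{ rewrite map_map. apply map_ext_in. intros z Hz. symmetry. apply lact_star_comm; auto.
          unfold starts_at in Hout. rewrite Forall_forall in Hout. auto. }
      rewrite <- (lact_star b a) at 1 by congruence.
      apply row_split_lact.
      * apply src_star. congruence.
      * apply hread_starts_at. exact Hl.
      * rewrite lact_star by congruence. exact Hab.
      * apply (IH _ (t b)); auto. apply src_star. congruence.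
  - destruct Hl as [Hw Hl]. unfold hread; simpl. apply (IH _ w); [exact Hl|simpl in Hw; congruence].
Qed.

Lemma row_split_hat x l v : chain (hs s) (ht t) v l -> hs s x = v ->
  row_split (arrows [x]) (hread l) (map (hlact x) (hread (star1 (hstar t star) x l))).
Proof.
  intros Hl Hx. destruct x as [a|w].
  - apply (row_split_arrow l a v); auto.
  - exists [], []. simpl. rewrite star1_heps, map_id. repeat split; auto.
Qed.

(* The grid [al * bl] is read off the common part [C] and the two differences
   [D], [E] of the readings; only [E] survives on the right column. *)
Lemma grid_split al bl v : chain (hs s) (ht t) v al -> chain (hs s) (ht t) v bl ->
  exists C D E, Permutation (hread al) (C ++ D) /\ Permutation (hread bl) (C ++ E) /\
    (forall e, In e E -> ~ In e D) /\ (E = [] <-> hread (starp (hstar t star) al bl) = []).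
Proof.
  revert bl v; induction al as [|x al IH]; intros bl v Ha Hb.
  - exists [], [], (hread bl). repeat split; auto; apply Permutation_refl.
  - destruct Ha as [Hx Ha]. simpl starp.
    destruct (row_split_hat x bl v Hb Hx) as (C1 & D1 & P1 & P2 & P3).
    pose proof (star1_chain x bl v Hb Hx) as Hb'.
    destruct (IH _ _ Ha Hb') as (C2 & D2 & E2 & Q1 & Q2 & Q3 & Q4).
    exists (C1 ++ map (hlact x) C2), (D1 ++ map (hlact x) D2), (map (hlact x) E2).
    split; [|split; [|split]].
    + rewrite hread_cons, P1, Q1, map_app, <- !app_assoc. apply Permutation_app_head.
      apply Permutation_app_swap_app.
    + rewrite P2, Q2, map_app, app_assoc. reflexivity.
    + intros e He HD. apply in_app_or in HD as [HD|HD].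
      * apply (P3 e HD). rewrite P2, Q2, map_app. apply in_or_app. right.
        apply in_or_app. right. exact He.
      * apply in_map_iff in He as (e1 & <- & He1), HD as (d1 & Hd1 & Hind1).
        pose proof (Permutation_Forall Q1 (hread_starts_at _ _ Ha)) as Sa.
        pose proof (Permutation_Forall Q2 (hread_starts_at _ _ Hb')) as Sb.
        apply Forall_app in Sa as [_ Sa], Sb as [_ Sb]. rewrite Forall_forall in Sa, Sb.
        apply hlact_inj in Hd1; auto. subst d1. apply (Q3 e1); auto.
    + rewrite <- Q4. split; [destruct E2; [reflexivity|discriminate]|intros ->; reflexivity].
Qed.

Lemma hread_nil_iff l : hread l = [] <-> Forall (@is_heps L A) l.
Proof.
  unfold hread. split.
  - induction l as [|[a|w] l IH]; simpl; intros H.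
    + constructor.
    + discriminate.
    + constructor; [exact I|auto].
  - induction 1 as [|[a|w] l Hx _ IH]; simpl in *; auto. contradiction.
Qed.

Lemma starp_units_iff al bl v : chain (hs s) (ht t) v al -> chain (hs s) (ht t) v bl ->
  Forall (@is_heps L A) (starp (hstar t star) al bl) <->
  exists r, Permutation (hread al) (hread bl ++ r).
Proof.
  intros Ha Hb. destruct (grid_split al bl v Ha Hb) as (C & D & E & P1 & P2 & P3 & P4).
  rewrite <- hread_nil_iff, <- P4. split.
  - intros ->. exists D. rewrite P1, P2, app_nil_r. reflexivity.
  - intros [r Hr]. destruct E as [|e E]; [reflexivity|exfalso].
    assert (HCD : Permutation (C ++ D) (C ++ (e :: E) ++ r))
      by (rewrite <- P1, Hr, P2, app_assoc; reflexivity).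
    apply Permutation_app_inv_l in HCD. apply (P3 e); [left; reflexivity|].
    rewrite HCD. left. reflexivity.
Qed.

Lemma rc_equiv_iff_perm v l1 l2 :
  chain (hs s) (ht t) v l1 -> chain (hs s) (ht t) v l2 ->
  rc_equiv (hs s) (ht t) (hstar t star) (@is_heps L A) (v, l1) (v, l2) <->
  Permutation (hread l1) (hread l2).
Proof.
  intros H1 H2. unfold rc_equiv, pvalid, psrc; simpl.
  rewrite (starp_units_iff l1 l2 v), (starp_units_iff l2 l1 v) by auto. split.
  - intros (_ & _ & _ & [r1 R1] & [r2 R2]).
    pose proof (Permutation_length R1) as E1. pose proof (Permutation_length R2) as E2.
    rewrite length_app in E1, E2.
    destruct r2; [|simpl in *; lia]. rewrite app_nil_r in R2. symmetry. exact R2.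
  - intros HP. repeat split; auto.
    + exists []. rewrite app_nil_r. exact HP.
    + exists []. rewrite app_nil_r. symmetry. exact HP.
Qed.

Definition drop_units (p : path L (hat L A)) : path L A := (fst p, arrows (snd p)).

Definition embed (q : path L A) : path L (hat L A) := (fst q, map harr (snd q)).

Lemma drop_units_functor :
  is_functor (C_hat s t star) (C_sigma s t lact ract) (fun v => v) drop_units.
Proof.
  unfold is_functor; simpl. split; [|split; [|split]].
  - intros [v l] Hl. destruct (arrows_chain l v Hl). auto.
  - intros [v l1] [w l2] H1 H2 H12. assert (Hvw : v = w) by apply H12. subst w.
    apply (rc_equiv_iff_perm v l1 l2 H1 H2) in H12.
    apply sig_cong_of_lread_perm; auto; apply arrows_chain; auto.
  - intros v. apply sc_refl. exact I.
  - intros [v l1] [w l2] H1 H2 Ht. unfold drop_units, pcat; simpl in *. rewrite arrows_app.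
    apply sc_refl. unfold pvalid; simpl. apply chain_app.
    destruct (arrows_chain l1 v H1) as [C1 E1]. destruct (arrows_chain l2 w H2) as [C2 _].
    split; auto. unfold ptgt in Ht; simpl in Ht. congruence.
Qed.

Lemma embed_functor :
  is_functor (C_sigma s t lact ract) (C_hat s t star) (fun v => v) embed.
Proof.
  unfold is_functor; simpl. split; [|split; [|split]].
  - intros [v l] Hl. destruct (map_harr_chain l v Hl). auto.
  - intros [v l1] [w l2] H1 H2 H12.
    destruct (sig_cong_valid _ _ H12) as (_ & _ & Hvw & _). simpl in Hvw. subst w.
    apply rc_equiv_iff_perm; try apply map_harr_chain; auto.
    unfold hread. rewrite !arrows_map_harr. apply (sig_cong_lread_perm _ _ H12).
  - intros v. apply rc_equiv_iff_perm; simpl; auto.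
  - intros [v l1] [w l2] H1 H2 Ht. unfold embed, pcat; simpl in *. rewrite map_app.
    assert (Hc : chain (hs s) (ht t) v (map harr l1 ++ map harr l2)).
    { apply chain_app. destruct (map_harr_chain l1 v H1) as [C1 ->].
      split; auto. apply map_harr_chain. unfold ptgt in Ht; simpl in Ht. rewrite Ht. exact H2. }
    apply rc_equiv_iff_perm; auto.
Qed.

Lemma embed_drop_units p : pvalid (hs s) (ht t) p ->
  rc_equiv (hs s) (ht t) (hstar t star) (@is_heps L A) (embed (drop_units p)) p.
Proof.
  destruct p as [v l]. intros Hl. unfold pvalid in Hl; simpl in Hl.
  apply rc_equiv_iff_perm; auto.
  - apply map_harr_chain, arrows_chain, Hl.
  - unfold hread; simpl. rewrite arrows_map_harr. reflexivity.
Qed.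

Lemma drop_units_embed q : drop_units (embed q) = q.
Proof. destruct q as [v l]. unfold drop_units, embed; simpl. rewrite arrows_map_harr. reflexivity.
Qed.

End Solution.

Theorem lemma5p6 (L A : Type) (s t : A -> L) (lact ract : A -> A -> A)
  (star : A -> A -> A)
  (HYB : qYB_map s t lact ract)
  (Hinv : involutive s t lact ract)
  (Hlnd : left_nondeg s t lact)
  (Hstar : forall x y, s x = s y -> s (star x y) = t x /\ lact x (star x y) = y) :
  cat_iso (C_hat s t star) (C_sigma s t lact ract).
Proof.
  exists (fun v => v), (fun v => v), (@drop_units L A), (@embed L A).
  split; [eapply drop_units_functor; eauto|].
  split; [eapply embed_functor; eauto|].
  split; [reflexivity|]. split; [reflexivity|]. split.
  - intros p Hp. eapply embed_drop_units; eauto.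
  - intros q Hq. simpl. rewrite drop_units_embed. apply sc_refl. exact Hq.
Qed.
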